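(* Every lexicographic transduction $f:\Sigma^*\rightharpoonup\Gamma^*$ (i.e. $f\in\mathsf{Lex}$) is regularity preserving: for every regular language $L\subseteq\Gamma^*$, the set $f^{-1}(L)=\{u\in\mathrm{dom}(f): f(u)\in L\}$ is regular.
   Context: Alphabets are finite. For words $u,v$ of equal length over alphabets $\Sigma_1,\Sigma_2$, $u\otimes v$ is the word over $\Sigma_1\times\Sigma_2$ with $(u\otimes v)[i]=(u[i],v[i])$. A transduction is a partial function $f:\Sigma^*\rightharpoonup\Gamma^*$. A simple transduction is a transduction $f=\sum_{i=1}^n L_i\triangleright w_i$, where $L_1,\dots,L_n\subseteq\Sigma^*$ are pairwise disjoint regular languages and each $w_i\in\Gamma^{\le 1}$ is a word of length at most 1. It satisfies $f(u)=w_i$ if $u\in L_i$, and $f(u)$ is undefined if $u\notin\bigcup_iL_i$. An ordered alphabet is a pair $\lambda=(B,\prec)$ with $B$ a finite set and $\prec$ a strict linear order on $B$. The order is extended to $B^n$ for each $n$ by: $u\prec v$ iff there is $i\le n$ with $u[i]\prec v[i]$ and $u[j]=v[j]$ for all $i<j\le n$ (most significant letter on the right). For a transduction $f:(\Sigma\times B)^*\rightharpoonup\Gamma^*$, the transduction $\mathsf{maplex}_\lambda f:\Sigma^*\rightharpoonup\Gamma^*$ maps $u$ to $f(u\otimes b_1)f(u\otimes b_2)\cdots f(u\otimes b_m)$, where $b_1\prec\cdots\prec b_m$ is the increasing enumeration of all of $B^{|u|}$. It is defined on $u$ iff every $f(u\otimes b_j)$ is defined. The classes are defined inductively: - $\mathsf{Lex}_0$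 is the class of simple transductions; - $\mathsf{Lex}_{k+1}=\{\mathsf{maplex}_\lambda f: \lambda=(B,\prec)\text{ an ordered alphabet},\ f:(\Sigma\times B)^*\rightharpoonup\Gamma^*\text{ in }\mathsf{Lex}_k\}$; - $\mathsf{Lex}=\bigcup_k\mathsf{Lex}_k$, the lexicographic transductions. Elements of $\mathsf{Lex}_k$ are called $k$-lexicographic. *)

From mathcomp Require Import all_boot.
Set Implicit Arguments. Unset Strict Implicit. Unset Printing Implicit Defensive.

Definition regular (S : finType) (L : seq S -> Prop) : Prop :=
  exists (Q : finType) (q0 : Q) (delta : Q -> S -> Q) (F : pred Q),
    forall w : seq S, F (foldl delta q0 w) <-> L w.

Definition transduction (S G : finType) := seq S -> option (seq G).

Definition simple_transduction (S G : finType) (f : transduction S G) : Prop :=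
  exists (n : nat) (L : 'I_n -> seq S -> Prop) (w : 'I_n -> seq G),
    (forall i, regular (L i)) /\
    (forall i j, i <> j -> forall u, L i u -> L j u -> False) /\
    (forall i, size (w i) <= 1) /\
    (forall u, (forall i, L i u -> f u = Some (w i)) /\
               ((forall i, ~ L i u) -> f u = None)).

Definition strict_linear_order (B : finType) (lt : rel B) : Prop :=
  irreflexive lt /\ transitive lt /\ (forall x y, x != y -> lt x y || lt y x).

(* Extension of the order to B^n: most significant letter on the right. *)
Definition lexlt (B : finType) (lt : rel B) (n : nat) (u v : n.-tuple B) : bool :=
  [exists i : 'I_n, lt (tnth u i) (tnth v i) &&
     [forall j : 'I_n, (i < j) ==> (tnth u j == tnth v j)]].

Definition lexle (B : finType) (lt : rel B) (n : nat) (u v : n.-tuple B) : bool :=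
  (u == v) || lexlt lt u v.

Definition lex_enum (B : finType) (lt : rel B) (n : nat) : seq (n.-tuple B) :=
  sort (@lexle B lt n) (enum {: n.-tuple B}).

Definition maplex (S G B : finType) (lt : rel B) (f : transduction (S * B)%type G)
  : transduction S G :=
  fun u =>
    let outs := [seq f (zip u (val b)) | b <- lex_enum lt (size u)] in
    if all (fun o => o != None) outs then Some (flatten [seq odflt [::] o | o <- outs])
    else None.

Fixpoint isLex (k : nat) (S G : finType) (f : transduction S G) {struct k} : Prop :=
  match k with
  | 0 => simple_transduction f
  | k'.+1 => exists (B : finType) (lt : rel B), strict_linear_order lt /\
       exists g : transduction (S * B)%type G,
         @isLex k' (S * B)%type G g /\ forall u, f u = maplex lt g u
  end.

Definition lexicographic (S G : finType) (f : transduction S G) : Prop :=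
  exists k, isLex k f.

Definition preimage (S G : finType) (f : transduction S G) (L : seq G -> Prop)
  : seq S -> Prop := fun u => exists w, f u = Some w /\ L w.

From HB Require Import structures.
From mathcomp Require Import all_boot zify.
Set Implicit Arguments. Unset Strict Implicit. Unset Printing Implicit Defensive.

(* Fix a DFA for L with transition function d and send each output word to its
   transition map, an element of the finite monoid M = option (Q -> Q) whose absorbing
   element None stands for "undefined".  It suffices that u |-> f u in M is computed
   by a DFA with output.  For simple transductions this is the product DFA of the
   languages L_i.  For maplex, a state is a functional Phi : (D -> M) -> M standing for
   F |-> prod_b F(delta_D(u (x) b)), the product over b in B^|u| in increasing order;
   as B^(n+1) is enumerated by the blocks B^n.c for the letters c in increasing order,
   reading x updates Phi to F |-> prod_c Phi(e |-> F(delta_D(e, (x, c)))). *)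

Lemma sorted_strict (T : eqType) (lt : rel T) (s : seq T) :
  uniq s -> sorted (fun x y => (x == y) || lt x y) s -> sorted lt s.
Proof.
elim: s => [|a [|b s] IH] //= /andP[a_s uniq_s] /andP[/orP[/eqP eq_ab|lt_ab] path_s].
  by rewrite eq_ab inE eqxx in a_s.
by rewrite lt_ab; apply: IH.
Qed.

Section Colex.
Variables (B : finType) (lt : rel B).
Hypothesis lt_order : strict_linear_order lt.

Let lt_irr : irreflexive lt. Proof. by case: lt_order. Qed.
Let lt_trans : transitive lt. Proof. by case: lt_order => _ []. Qed.
Let lt_total x y : x != y -> lt x y || lt y x.
Proof. by case: lt_order => _ [] _; apply. Qed.

Fixpoint lex_lt (u v : seq B) : bool :=
  if (u, v) is (x :: u', y :: v') then lt x y || (x == y) && lex_lt u' v' else false.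

Definition colex_lt u v := lex_lt (rev u) (rev v).

Lemma lex_lt_irr : irreflexive lex_lt.
Proof. by elim=> //= x u ->; rewrite lt_irr andbF. Qed.

Lemma lex_lt_trans : transitive lex_lt.
Proof.
move=> v u; elim: u v => [|x u IH] [|y v] [|z w] //=.
case/orP=> [lt_xy|/andP[/eqP <- lt_uv]]; case/orP=> [lt_yz|/andP[/eqP <- lt_vw]].
- by rewrite (lt_trans lt_xy lt_yz).
- by rewrite lt_xy.
- by rewrite lt_yz.
- by rewrite eqxx (IH _ _ lt_uv lt_vw) orbT.
Qed.

Lemma lex_lt_total u v : size u = size v -> u != v -> lex_lt u v || lex_lt v u.
Proof.
elim: u v => [|x u IH] [|y v] //= [] size_uv.
have [<-|neq_xy] := eqVneq x y => neq_uv; last first.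
  by case/orP: (lt_total neq_xy) => ->; rewrite ?orbT.
rewrite lt_irr /=; apply: IH => //.
by apply: contra_neq neq_uv => ->.
Qed.

Lemma colex_lt_irr : irreflexive colex_lt.
Proof. by move=> u; apply: lex_lt_irr. Qed.

Lemma colex_lt_trans : transitive colex_lt.
Proof. by move=> v u w; apply: lex_lt_trans. Qed.

Lemma colex_lt_total u v : size u = size v -> u != v -> colex_lt u v || colex_lt v u.
Proof.
by move=> size_uv neq_uv; apply: lex_lt_total; rewrite ?size_rev ?(inj_eq (can_inj revK)).
Qed.

Lemma colex_lt_rcons u v x y :
  colex_lt (rcons u x) (rcons v y) = lt x y || (x == y) && colex_lt u v.
Proof. by rewrite /colex_lt !rev_rcons. Qed.

Lemma colex_lt_nth x0 n (u v : seq B) : size u = n -> size v = n ->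
  colex_lt u v <-> exists i, [/\ i < n, lt (nth x0 u i) (nth x0 v i) &
     forall j, i < j < n -> nth x0 u j = nth x0 v j].
Proof.
elim: n u v => [|n IH] u v.
  by move=> /size0nil -> /size0nil ->; split=> // -[i []].
case/lastP: u => [//|u x]; case/lastP: v => [//|v y].
rewrite !size_rcons => -[size_u] [size_v].
have nth_u j : nth x0 (rcons u x) j = if j < n then nth x0 u j else if j == n then x else x0.
  by rewrite nth_rcons size_u.
have nth_v j : nth x0 (rcons v y) j = if j < n then nth x0 v j else if j == n then y else x0.
  by rewrite nth_rcons size_v.
rewrite colex_lt_rcons; split.
- case/orP=> [lt_xy|/andP[/eqP eq_xy /(IH _ _ size_u size_v)[i [lt_in lt_i eq_above]]]].
    exists n; rewrite nth_u nth_v ltnn eqxx; split=> // j /andP[]; lia.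
  exists i; rewrite nth_u nth_v lt_in; split=> [||j /andP[lt_ij]]; [lia|done|].
  rewrite ltnS leq_eqVlt nth_u nth_v => /orP[/eqP->|lt_jn]; first by rewrite ltnn eqxx eq_xy.
  by rewrite lt_jn eq_above ?lt_ij.
- move=> [i [lt_in1 lt_i eq_above]]; move: lt_i; rewrite nth_u nth_v.
  case: ltnP => [lt_in lt_i|le_ni]; last first.
    have -> : i = n by lia.
    by rewrite eqxx => ->.
  have eq_xy : x = y by have := eq_above n; rewrite nth_u nth_v ltnn eqxx; apply; lia.
  rewrite eq_xy lt_irr eqxx /=; apply/(IH _ _ size_u size_v); exists i; split=> // j lt_ijn.
  by have := eq_above j; rewrite nth_u nth_v (proj2 (andP lt_ijn)); apply; lia.
Qed.

Lemma lexlt_colex n (u v : n.-tuple B) : lexlt lt u v = colex_lt u v.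
Proof.
case: n u v => [|n] u v.
  by rewrite (tuple0 u) (tuple0 v); apply/existsP => -[[]].
have x0 := tnth u ord0.
have colex_lt_nth_uv := colex_lt_nth x0 (size_tuple u) (size_tuple v).
apply/existsP/idP.
- move=> [i /andP[lt_i /forallP eq_above]]; apply/colex_lt_nth_uv; exists i.
  rewrite -!tnth_nth; split=> // j /andP[lt_ij lt_jn].
  have /implyP/(_ lt_ij)/eqP := eq_above (Ordinal lt_jn).
  by rewrite !(tnth_nth x0).
- move=> /colex_lt_nth_uv[i [lt_in lt_i eq_above]]; exists (Ordinal lt_in).
  rewrite !(tnth_nth x0) lt_i; apply/forallP => j; apply/implyP => lt_ij.
  by rewrite !(tnth_nth x0) eq_above // lt_ij ltn_ord.
Qed.

Definition letters : seq B := sort (fun x y => (x == y) || lt x y) (enum B).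

Lemma mem_letters x : x \in letters.
Proof. by rewrite mem_sort mem_enum. Qed.

Lemma letters_sorted : sorted lt letters.
Proof.
apply: sorted_strict; first by rewrite sort_uniq enum_uniq.
apply: sort_sorted => x y /=.
have [->|/lt_total/orP[]->] := eqVneq x y; by rewrite ?eqxx ?orbT.
Qed.

Definition lex_seq n : seq (seq B) := map val (lex_enum lt n).

Lemma mem_lex_seq n s : (s \in lex_seq n) = (size s == n).
Proof.
apply/mapP/idP => [[t _ ->]|/eqP size_s]; first by rewrite size_tuple.
by exists (Tuple (introT eqP size_s)); rewrite // mem_sort mem_enum.
Qed.

Lemma lex_seq_sorted n : sorted colex_lt (lex_seq n).
Proof.
apply: sorted_strict.
  by rewrite (map_inj_uniq val_inj) sort_uniq enum_uniq.
rewrite sorted_map; apply: sub_sorted (sort_sorted _ _) => [u v|u v].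
  by rewrite /lexle lexlt_colex.
rewrite /lexle !lexlt_colex; have [//|neq_uv /=] := eqVneq u v.
by apply: colex_lt_total; rewrite ?size_tuple // val_eqE.
Qed.

Lemma lex_seq0 : lex_seq 0 = [:: [::]].
Proof.
apply: (irr_sorted_eq colex_lt_trans colex_lt_irr (lex_seq_sorted 0)) => // s.
by rewrite mem_lex_seq inE; case: s.
Qed.

Lemma pairwise_rcons_blocks (cs : seq B) (ss : seq (seq B)) :
  pairwise lt cs -> pairwise colex_lt ss ->
  pairwise colex_lt [seq rcons s c | c <- cs, s <- ss].
Proof.
move=> lt_cs lt_ss; elim: cs lt_cs => [|c cs IH] //.
rewrite pairwise_cons pairwise_cat pairwise_map => /andP[lt_c_cs /IH ->].
rewrite andbT; apply/andP; split.
  apply/allrelP => _ _ /mapP[s _ ->] /allpairsP[[c' s'] [/= c'_cs _ ->]].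
  by rewrite colex_lt_rcons (allP lt_c_cs).
by apply: sub_pairwise lt_ss => s s' /=; rewrite colex_lt_rcons lt_irr eqxx.
Qed.

Lemma lex_seqS n : lex_seq n.+1 = [seq rcons s c | c <- letters, s <- lex_seq n].
Proof.
apply: (irr_sorted_eq colex_lt_trans colex_lt_irr (lex_seq_sorted n.+1)).
  rewrite sorted_pairwise; last exact: colex_lt_trans.
  apply: pairwise_rcons_blocks.
    by rewrite -sorted_pairwise ?letters_sorted.
  by rewrite -sorted_pairwise ?lex_seq_sorted; last exact: colex_lt_trans.
move=> s; rewrite mem_lex_seq; apply/idP/allpairsP.
- case/lastP: s => [//|s x]; rewrite size_rcons eqSS => size_s.
  by exists (x, s); rewrite /= mem_letters mem_lex_seq.
- by move=> [[c s'] [/= _ + ->]]; rewrite mem_lex_seq size_rcons.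
Qed.

End Colex.

Section TransitionMonoid.
Variable Q : finType.

Definition pmul (a b : option {ffun Q -> Q}) : option {ffun Q -> Q} :=
  if (a, b) is (Some f, Some g) then Some [ffun q => g (f q)] else None.
Definition pone : option {ffun Q -> Q} := Some [ffun q => q].

Lemma pmulA : associative pmul.
Proof. by move=> [a|] [b|] [c|] //=; congr Some; apply/ffunP => q; rewrite !ffunE. Qed.
Lemma pmul1m : left_id pone pmul.
Proof. by move=> [a|] //=; congr Some; apply/ffunP => q; rewrite !ffunE. Qed.
Lemma pmulm1 : right_id pone pmul.
Proof. by move=> [a|] //=; congr Some; apply/ffunP => q; rewrite !ffunE. Qed.

HB.instance Definition _ := Monoid.isLaw.Build _ pone pmul pmulA pmul1m pmulm1.

Variables (G : eqType) (d : Q -> G -> Q).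

Definition trans_of (w : seq G) : {ffun Q -> Q} := [ffun q => foldl d q w].

Lemma big_pmul_trans (os : seq (option (seq G))) :
  \big[pmul/pone]_(o <- os) omap trans_of o =
  if all (fun o => o != None) os then Some (trans_of (flatten [seq odflt [::] o | o <- os]))
  else None.
Proof.
elim: os => [|o os IH].
  by rewrite big_nil /pone; congr Some; apply/ffunP => q; rewrite !ffunE.
rewrite big_cons IH; case: o => [w|] //=; case: all => //=.
by congr Some; apply/ffunP => q; rewrite !ffunE foldl_cat.
Qed.

End TransitionMonoid.
Arguments pmul {Q}.
Arguments pone {Q}.

Definition trans_recognizable (S G : finType) (f : transduction S G) : Prop :=
  forall (Q : finType) (d : Q -> G -> Q),
  exists (P : finType) (p0 : P) (dP : P -> S -> P) (out : P -> option {ffun Q -> Q}),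
    forall u, out (foldl dP p0 u) = omap (trans_of d) (f u).

Lemma regular_preimage (S G : finType) (f : transduction S G) (L : seq G -> Prop) :
  trans_recognizable f -> regular L -> regular (preimage f L).
Proof.
move=> f_rec [Q [q0 [d [F dfa_L]]]]; have [P [p0 [dP [out out_f]]]] := f_rec Q d.
exists P, p0, dP, (fun p => if out p is Some t then F (t q0) else false) => u.
rewrite out_f /preimage; case: (f u) => [w|] /=; last by split=> // -[w' []].
rewrite ffunE dfa_L; split=> [L_w|[w' [[<-]]]] //; by exists w.
Qed.

Lemma foldl_pair (S Q1 Q2 : Type) (d1 : Q1 -> S -> Q1) (d2 : Q2 -> S -> Q2) w q1 q2 :
  foldl (fun q x => (d1 q.1 x, d2 q.2 x)) (q1, q2) w = (foldl d1 q1 w, foldl d2 q2 w).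
Proof. by elim: w q1 q2 => //= x w IH q1 q2; rewrite IH. Qed.

Lemma regular_family (S : finType) n (L : 'I_n -> seq S -> Prop) :
  (forall i, regular (L i)) ->
  exists (Q : finType) (q0 : Q) (d : Q -> S -> Q) (F : 'I_n -> pred Q),
    forall i w, F i (foldl d q0 w) <-> L i w.
Proof.
elim: n L => [|n IH] L reg_L.
  by exists unit, tt, (fun _ _ => tt), (fun _ _ => false) => -[].
have [Q [q0 [d [F dfa]]]] := IH (L \o lift ord_max) (fun i => reg_L _).
have [Q' [q0' [d' [F' dfa']]]] := reg_L ord_max.
exists (Q * Q')%type, (q0, q0'), (fun q x => (d q.1 x, d' q.2 x)),
  (fun i q => if unlift ord_max i is Some j then F j q.1 else F' q.2) => i w.
by rewrite foldl_pair; case: unliftP => [j ->|->]; [apply: dfa | apply: dfa'].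
Qed.

Lemma trans_recognizable_simple (S G : finType) (f : transduction S G) :
  simple_transduction f -> trans_recognizable f.
Proof.
move=> [n [L [w [reg_L [_ [_ f_L]]]]]] Q d.
have [P [p0 [dP [F dfa]]]] := regular_family reg_L.
exists P, p0, dP, (fun p => if [pick i | F i p] is Some i then Some (trans_of d (w i)) else None).
move=> u; case: pickP => [i /dfa L_i_u | no_i]; first by rewrite (proj1 (f_L u) i L_i_u).
by rewrite (proj2 (f_L u)) // => i /dfa; rewrite no_i.
Qed.

Section Maplex.
Variables (S G B : finType) (lt : rel B) (Q D : finType).
Hypothesis lt_order : strict_linear_order lt.
Variables (d : Q -> G -> Q) (g : transduction (S * B)%type G).
Variables (d0 : D) (dD : D -> (S * B)%type -> D).

Local Notation M := (option {ffun Q -> Q}).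
Local Notation functional := {ffun {ffun D -> M} -> M}.

Definition maplex_init : functional := [ffun F : {ffun D -> M} => F d0].

Definition maplex_step (Phi : functional) (x : S) : functional :=
  [ffun F : {ffun D -> M} => \big[pmul/pone]_(c <- letters lt) Phi [ffun e => F (dD e (x, c))]].

Lemma maplex_run u F :
  foldl maplex_step maplex_init u F =
  \big[pmul/pone]_(b <- lex_seq lt (size u)) F (foldl dD d0 (zip u b)).
Proof.
elim/last_ind: u F => [|u x IH] F.
  by rewrite (lex_seq0 lt_order) big_seq1 ffunE.
rewrite foldl_rcons ffunE size_rcons (lex_seqS lt_order) big_allpairs_dep.
apply: eq_bigr => c _; rewrite IH big_seq_cond [RHS]big_seq_cond.
apply: eq_bigr => b /andP[+ _]; rewrite mem_lex_seq => /eqP size_b.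
by rewrite ffunE zip_rcons ?foldl_rcons.
Qed.

Lemma trans_maplex u :
  omap (trans_of d) (maplex lt g u) =
  \big[pmul/pone]_(b <- lex_seq lt (size u)) omap (trans_of d) (g (zip u b)).
Proof.
rewrite /lex_seq big_map -(big_map (fun b : (size u).-tuple B => g (zip u b)) xpredT).
by rewrite big_pmul_trans /maplex; case: all.
Qed.

End Maplex.

Lemma trans_recognizable_maplex (S G B : finType) (lt : rel B) (f : transduction S G)
    (g : transduction (S * B)%type G) :
  strict_linear_order lt -> trans_recognizable g ->
  (forall u, f u = maplex lt g u) -> trans_recognizable f.
Proof.
move=> lt_order g_rec f_g Q d; have [D [d0 [dD [outD outD_g]]]] := g_rec Q d.
exists {ffun {ffun D -> option {ffun Q -> Q}} -> option {ffun Q -> Q}}, (maplex_init Q d0),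
  (maplex_step lt dD), (fun Phi : {ffun _ -> _} => Phi [ffun e => outD e]) => u.
rewrite (maplex_run lt_order) f_g trans_maplex.
by apply: eq_bigr => b _; rewrite ffunE outD_g.
Qed.

Lemma trans_recognizable_lex k (S G : finType) (f : transduction S G) :
  isLex k f -> trans_recognizable f.
Proof.
elim: k S f => [|k IH] S f /=; first exact: trans_recognizable_simple.
move=> [B [lt [lt_order [g [g_lex f_g]]]]].
exact: trans_recognizable_maplex lt_order (IH _ _ g_lex) f_g.
Qed.

Theorem mainTheorem15 (S G : finType) (f : transduction S G) :
  lexicographic f ->
  forall L : seq G -> Prop, regular L -> regular (preimage f L).
Proof.
move=> [k f_lex] L; apply: regular_preimage.
exact: trans_recognizable_lex f_lex.
Qed.
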